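(* Let $X$ be a complete hyperbolic surface of finite area, $p$ a cusp and $N_p(r)$ a horoball neighborhood of $p$. For positive integers $n,m$, the number of intersection points (with multiplicity) between an $n$-excursion and an $m$-excursion in $N_p(r)$ is at most $2\min(n,m)+2$.
   Context: $N_p(r)$ is the embedded horoball neighborhood of $p$ whose boundary horocycle $\partial N_p(r)$ has length $r$. Lift to the upper half-plane with $p$ at $\infty$, so $N_p(r)$ lifts to $\{\mathrm{Im}\,z\ge h\}$ and the stabilizer of $\infty$ is generated by a translation $z\mapsto z+w$. An $n$-excursion in $N_p(r)$ is a geodesic arc contained in $N_p(r)$ with both endpoints on $\partial N_p(r)$ whose lifted endpoints $z_1,z_2$ satisfy $n\le|\mathrm{Re}\,z_1-\mathrm{Re}\,z_2|/w<n+1$ (winding number $n$ around the cusp). *)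

(* Model of the embedded horoball neighbourhood N_p(r) via its lift to the
   upper half-plane: points are pairs (x, y) = (Re z, Im z), N_p(r) lifts to
   {y >= h}, and the cusp stabiliser is generated by z |-> z + w with
   w = r * h (so the boundary horocycle has length w / h = r). *)
From HB Require Import structures.
From mathcomp Require Import all_boot all_order all_algebra.
From mathcomp Require Import reals.
Set Implicit Arguments. Unset Strict Implicit. Unset Printing Implicit Defensive.
Import Order.TTheory GRing.Theory Num.Theory.
Local Open Scope ring_scope.

(* The lift of a geodesic arc of N_p(r) with both endpoints on the horocycle
   {y = h}: the part above height h of the semicircle (geodesic of H^2) with
   Euclidean centre (c, 0) and radius rho. *)
Definition on_arc {R : realType} (h c rho : R) (p : R * R) : Prop :=
  (p.1 - c) ^+ 2 + p.2 ^+ 2 = rho ^+ 2 /\ h <= p.2.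

Definition excursion_endpoints {R : realType} (h c rho : R) : (R * R) * (R * R) :=
  ((c - Num.sqrt (rho ^+ 2 - h ^+ 2), h), (c + Num.sqrt (rho ^+ 2 - h ^+ 2), h)).

Definition is_n_excursion {R : realType} (w h c rho : R) (n : nat) : Prop :=
  h < rho /\
  let z1 := (excursion_endpoints h c rho).1 in
  let z2 := (excursion_endpoints h c rho).2 in
  n%:R <= `|z1.1 - z2.1| / w < n.+1%:R.

(* Two lifted arcs project to the same arc of the cusp neighbourhood iff they
   differ by an element of the stabiliser <z |-> z + w>. *)
Definition same_excursion {R : realType} (w c1 rho1 c2 rho2 : R) : Prop :=
  rho1 = rho2 /\ exists k : int, c1 - c2 = k%:~R * w.

(* An intersection point, counted with multiplicity: a pair (p1, p2) of
   points on the two lifted arcs (i.e. a pair of parameter values) with the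
   same image in the quotient {y >= h} / <z |-> z + w>. *)
Definition excursion_intersection {R : realType} (w h c1 rho1 c2 rho2 : R)
    (q : (R * R) * (R * R)) : Prop :=
  on_arc h c1 rho1 q.1 /\ on_arc h c2 rho2 q.2 /\
  q.1.2 = q.2.2 /\ exists k : int, q.1.1 - q.2.1 = k%:~R * w.

(* Lift to the upper half-plane.  An intersection point of the two excursions
   is an intersection of the first lifted arc with a translate of the second
   by k w, k an integer.  Two distinct geodesics meet at most once, so
   intersection points are determined by k.  The two arcs cut the horocycle
   {y = h} in chords of half-lengths A1, A2, and they can only meet when these
   chords interlace, i.e. when the distance d between the centres satisfies
   |A1 - A2| <= |d| <= A1 + A2.  This leaves two windows of length
   2 min(A1, A2) < (min(n, m) + 1) w, each containing at most min(n, m) + 1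
   admissible translates. *)
From mathcomp Require Import all_boot all_order all_algebra.
From mathcomp Require Import reals.
From mathcomp Require Import ring lra zify.
Set Implicit Arguments. Unset Strict Implicit. Unset Printing Implicit Defensive.
Import Order.TTheory GRing.Theory Num.Theory.
Local Open Scope ring_scope.

Lemma norm_sub_half_chords (R : realFieldType) (u v A1 A2 t : R) :
  0 <= A1 -> 0 <= A2 -> 0 <= t ->
  u ^+ 2 + t = A1 ^+ 2 -> v ^+ 2 + t = A2 ^+ 2 ->
  `|A1 - A2| <= `|u - v| <= A1 + A2.
Proof.
move=> A1_ge0 A2_ge0 t_ge0 eA1 eA2.
have u_le : `|u| <= A1 by rewrite -ler_sqr ?nnegrE // real_normK ?num_real //; lra.
have v_le : `|v| <= A2 by rewrite -ler_sqr ?nnegrE // real_normK ?num_real //; lra.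
apply/andP; split; last first.
  by apply: (le_trans (ler_normB u v)); exact: lerD.
(* Cauchy-Schwarz for (u, sqrt t) and (v, sqrt t): u v + t <= A1 A2. *)
have cs : u * v + t <= A1 * A2.
  have sq : (u * v + t) ^+ 2 <= (A1 * A2) ^+ 2.
    rewrite exprMn -eA1 -eA2; have := mulr_ge0 t_ge0 (sqr_ge0 (u - v)); nra.
  have := mulr_ge0 A1_ge0 A2_ge0; nra.
rewrite -ler_sqr ?nnegrE // !real_normK ?num_real //; nra.
Qed.

Lemma chord_overlap_lt (R : realFieldType) (A1 A2 w : R) (n m : nat) :
  A1 * 2 < n.+1%:R * w -> A2 * 2 < m.+1%:R * w ->
  A1 + A2 - `|A1 - A2| < (minn n m).+1%:R * w.
Proof.
move=> A1_lt A2_lt.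
have : A1 - A2 <= `|A1 - A2| := ler_norm _.
have : A2 - A1 <= `|A1 - A2| by rewrite distrC ler_norm.
by case: leqP => _; lra.
Qed.

Section Windows.

Variable R : archiRealFieldType.

Definition window_ints (w lo : R) (M : nat) : seq int :=
  [seq Num.ceil (lo / w) + j%:Z | j <- iota 0 M.+1].

Lemma size_window_ints (w lo : R) (M : nat) : size (window_ints w lo M) = M.+1.
Proof. by rewrite size_map size_iota. Qed.

Lemma mem_window_ints (w lo L : R) (M : nat) (k : int) :
  0 < w -> L < M.+1%:R * w -> lo <= k%:~R * w <= lo + L ->
  k \in window_ints w lo M.
Proof.
move=> w_gt0 L_lt /andP[lo_le le_hi].
set k0 := Num.ceil (lo / w).
have k0_le : k0 <= k by rewrite ceil_le_int ler_pdivrMr.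
have lo_le_k0 : lo <= k0%:~R * w by rewrite -ler_pdivrMr // ceil_ge.
have k_lt : ((k - k0)%:~R : R) < (Posz M.+1)%:~R.
  by rewrite rmorphB /= -(ltr_pM2r w_gt0); nra.
rewrite ltr_int in k_lt.
apply/mapP; exists `|k - k0|%N; first by rewrite mem_iota; lia.
lia.
Qed.

Lemma mem_window_ints_norm (w lo L c : R) (M : nat) (k : int) :
  0 < w -> L < M.+1%:R * w -> lo <= `|c + k%:~R * w| <= lo + L ->
  k \in window_ints w (lo - c) M ++ window_ints w (- (lo + L) - c) M.
Proof.
move=> w_gt0 L_lt; rewrite mem_cat.
case: (lerP 0 (c + k%:~R * w)) => [d_ge0 | d_lt0].
  rewrite ger0_norm // => d_in; apply/orP; left.
  by apply: (mem_window_ints (L := L) w_gt0 L_lt); lra.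
rewrite ltr0_norm // => d_in; apply/orP; right.
by apply: (mem_window_ints (L := L) w_gt0 L_lt); lra.
Qed.

End Windows.

Definition half_chord {R : rcfType} (h rho : R) : R :=
  Num.sqrt (rho ^+ 2 - h ^+ 2).

Section Arcs.

Variables (R : realType) (w h : R).
Hypothesis h_ge0 : 0 <= h.

Lemma half_chord_ge0 (rho : R) : 0 <= half_chord h rho.
Proof. exact: sqrtr_ge0. Qed.

Lemma on_arc_half_chord (c rho : R) (p : R * R) : h <= rho ->
  on_arc h c rho p ->
  0 <= p.2 ^+ 2 - h ^+ 2 /\
  (p.1 - c) ^+ 2 + (p.2 ^+ 2 - h ^+ 2) = half_chord h rho ^+ 2.
Proof.
move=> h_le [e p2_ge].
have sqr_le (x : R) : h <= x -> 0 <= x ^+ 2 - h ^+ 2.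
  by move=> h_le_x; rewrite subr_ge0 ler_sqr ?nnegrE //; apply: le_trans h_le_x.
rewrite sqr_sqrtr; last exact: sqr_le.
by split; [exact: sqr_le | lra].
Qed.

Lemma excursion_half_chord_lt (c rho : R) (n : nat) : 0 < w ->
  is_n_excursion w h c rho n -> half_chord h rho * 2 < n.+1%:R * w.
Proof.
move=> w_gt0 [_ /= /andP[_]]; rewrite -/(half_chord h rho).
have -> : c - half_chord h rho - (c + half_chord h rho) =
          - (half_chord h rho * 2) by ring.
by rewrite normrN ger0_norm ?mulr_ge0 ?half_chord_ge0 // ltr_pdivrMr.
Qed.

Variables (c1 rho1 c2 rho2 : R).
Hypotheses (h_le1 : h <= rho1) (h_le2 : h <= rho2).

Lemma excursion_intersection_shift (q : (R * R) * (R * R)) :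
  excursion_intersection w h c1 rho1 c2 rho2 q ->
  exists k : int, q.1.1 - q.2.1 = k%:~R * w /\
    `|half_chord h rho1 - half_chord h rho2| <= `|c2 - c1 + k%:~R * w|
      <= half_chord h rho1 + half_chord h rho2.
Proof.
move=> [on1 [on2 [ey [k ek]]]]; exists k; split=> //.
have [t_ge0 e1] := on_arc_half_chord h_le1 on1.
have [_ e2] := on_arc_half_chord h_le2 on2; rewrite -ey in e2.
have -> : c2 - c1 + k%:~R * w = (q.1.1 - c1) - (q.2.1 - c2) by lra.
exact: norm_sub_half_chords (half_chord_ge0 _) (half_chord_ge0 _) t_ge0 e1 e2.
Qed.

Lemma excursion_intersection_inj (q q' : (R * R) * (R * R)) :
  ~ same_excursion w c1 rho1 c2 rho2 ->
  excursion_intersection w h c1 rho1 c2 rho2 q ->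
  excursion_intersection w h c1 rho1 c2 rho2 q' ->
  q.1.1 - q.2.1 = q'.1.1 - q'.2.1 -> q = q'.
Proof.
case: q q' => [[x y] [x2 y2]] [[x' y'] [x2' y2']] not_same.
move=> [[e1 y_ge] [[e2 _] [/= ey [k /= ek]]]] [[e1' y'_ge] [[e2' _] [/= ey' _]]] /= ex.
rewrite /= in e1 e1'; rewrite /= -ey in e2; rewrite /= -ey' in e2'.
set D := c2 + k%:~R * w - c1.
have D_neq0 : D != 0.
  apply/eqP; rewrite /D => D0; apply: not_same; split; last by exists k; lra.
  have e : rho1 ^+ 2 = rho2 ^+ 2 by rewrite -e1 -e2; congr (_ ^+ 2 + _); lra.
  apply/eqP; rewrite -(@eqrXn2 _ 2) ?(le_trans h_ge0) //; exact/eqP.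
(* Subtracting the two circle equations leaves a linear equation in x. *)
have D_x : D * (x - x') = 0.
  have a : x2 - c2 = x - c1 - D by rewrite /D; lra.
  have a' : x2' - c2 = x' - c1 - D by rewrite /D; lra.
  rewrite a in e2; rewrite a' in e2'; nra.
have ex_x : x = x'.
  by apply/eqP; move/eqP: D_x; rewrite mulf_eq0 (negbTE D_neq0) subr_eq0.
have ex_y : y = y'.
  apply/eqP; rewrite -(@eqrXn2 _ 2) ?(le_trans h_ge0) //.
  by apply/eqP; rewrite ex_x in e1; lra.
have ex_x2 : x2 = x2' by lra.
by rewrite ex_x ex_y ex_x2 -ey -ey' ex_y.
Qed.

End Arcs.

Theorem lemma4p3 (R : realType) (r h : R) (n m : nat)
    (c1 rho1 c2 rho2 : R) :
  0 < r -> 0 < h -> (0 < n)%N -> (0 < m)%N ->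
  is_n_excursion (r * h) h c1 rho1 n ->
  is_n_excursion (r * h) h c2 rho2 m ->
  ~ same_excursion (r * h) c1 rho1 c2 rho2 ->
  forall s : seq ((R * R) * (R * R)), uniq s ->
  (forall q, q \in s -> excursion_intersection (r * h) h c1 rho1 c2 rho2 q) ->
  (size s <= 2 * minn n m + 2)%N.
Proof.
move=> r_gt0 h_gt0 _ _ X1 X2 not_same s s_uniq s_int.
set w := r * h in X1 X2 not_same s_int.
have w_gt0 : 0 < w by exact: mulr_gt0.
have h_ge0 : 0 <= h by exact: ltW.
have h_le1 : h <= rho1 by case: X1 => /ltW.
have h_le2 : h <= rho2 by case: X2 => /ltW.
have A1_lt := excursion_half_chord_lt w_gt0 X1.
have A2_lt := excursion_half_chord_lt w_gt0 X2.
set A1 := half_chord h rho1 in A1_lt; set A2 := half_chord h rho2 in A2_lt.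
set lo := `|A1 - A2|; set L := A1 + A2 - lo; set M := minn n m.
have L_lt : L < M.+1%:R * w by exact: chord_overlap_lt.
pose shift (q : (R * R) * (R * R)) := q.1.1 - q.2.1.
have shift_uniq : uniq (map shift s).
  rewrite map_inj_in_uniq // => q q' /s_int Hq /s_int Hq'.
  exact: (excursion_intersection_inj h_ge0 h_le1 h_le2 not_same Hq Hq').
have shift_sub : {subset map shift s <=
    [seq k%:~R * w | k <- window_ints w (lo - (c2 - c1)) M ++
                          window_ints w (- (lo + L) - (c2 - c1)) M]}.
  move=> _ /mapP[q /s_int Hq ->].
  have [k [shift_q k_in]] := excursion_intersection_shift h_ge0 h_le1 h_le2 Hq.
  rewrite /shift shift_q; apply: (map_f (fun k : int => k%:~R * w)).
  apply: mem_window_ints_norm w_gt0 L_lt _.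
  have -> : lo + L = A1 + A2 by rewrite /L addrC subrK.
  exact: k_in.
have := uniq_leq_size shift_uniq shift_sub.
by rewrite !size_map size_cat !size_window_ints addnn -mul2n mulnSr.
Qed.
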